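(* Let $G$ and $H$ be groups, $\Psi\colon G\to\operatorname{Aut}H$ a group homomorphism (written $g\mapsto\Psi_g$), and let $B\colon H\to G$ be a relative Rota--Baxter operator on $H$ with respect to $(G,\Psi)$. Let $H\rtimes_\Psi G$ be the semi-direct product. Then the map $$B'\colon H\rtimes_\Psi G\to H\rtimes_\Psi G,\qquad B'((h,a))=(e,\,a^{-1}B(h)),\quad h\in H,\ a\in G,$$ is a Rota--Baxter operator (of weight $1$) on $H\rtimes_\Psi G$.
   Context: A relative Rota--Baxter operator on $H$ with respect to $(G,\Psi)$ is a map $B\colon H\to G$ with $B(h)B(k)=B(h\Psi_{B(h)}(k))$ for all $h,k\in H$. The semi-direct product $H\rtimes_\Psi G$ is the set $H\times G$ with multiplication $(h,a)(k,b)=(h\Psi_a(k),ab)$; $e$ denotes the identity of $H$. A Rota--Baxter operator (of weight $1$) on a group $K$ is a map $R\colon K\to K$ with $R(u)R(v)=R(uR(u)vR(u)^{-1})$ for all $u,v\in K$. *)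

From Stdlib Require Import Setoid.

Record group := Group {
  carrier :> Type;
  gmul : carrier -> carrier -> carrier;
  ginv : carrier -> carrier;
  gone : carrier;
  gmulA : forall x y z, gmul x (gmul y z) = gmul (gmul x y) z;
  gmul1l : forall x, gmul gone x = x;
  gmul1r : forall x, gmul x gone = x;
  gmulVl : forall x, gmul (ginv x) x = gone;
  gmulVr : forall x, gmul x (ginv x) = gone
}.

Arguments gmul {g}.
Arguments ginv {g}.
Arguments gone {g}.

(* A group homomorphism Psi : G -> Aut H, g |-> Psi_g, presented as a map
   G -> H -> H such that each Psi_g is a homomorphism of H, Psi_{ab} =
   Psi_a o Psi_b and Psi_1 = id (hence each Psi_g is bijective). *)
Record action (G H : group) := Action {
  act :> G -> H -> H;
  act_mul : forall g h k, act g (gmul h k) = gmul (act g h) (act g k);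
  act_comp : forall a b h, act (gmul a b) h = act a (act b h);
  act_one : forall h, act gone h = h
}.

Arguments act {G H}.

Lemma group_idem (K : group) (x : K) : gmul x x = x -> x = gone.
Proof.
  intro E. transitivity (gmul (gmul (ginv x) x) x).
  - rewrite gmulVl, gmul1l. reflexivity.
  - rewrite <- gmulA, E, gmulVl. reflexivity.
Qed.

Lemma act_e (G H : group) (P : action G H) (g : G) : P g gone = gone.
Proof.
  apply group_idem. rewrite <- act_mul, gmul1l. reflexivity.
Qed.

Section Semidirect.
Variables (G H : group) (P : action G H).

Definition sd_mul (u v : H * G) : H * G :=
  (gmul (fst u) (P (snd u) (fst v)), gmul (snd u) (snd v)).
Definition sd_inv (u : H * G) : H * G :=
  (P (ginv (snd u)) (ginv (fst u)), ginv (snd u)).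
Definition sd_one : H * G := (gone, gone).

Lemma sd_mulA x y z : sd_mul x (sd_mul y z) = sd_mul (sd_mul x y) z.
Proof.
  destruct x as [h a], y as [k b], z as [l c]; unfold sd_mul; simpl.
  rewrite act_mul, act_comp, !gmulA. reflexivity.
Qed.
Lemma sd_mul1l x : sd_mul sd_one x = x.
Proof. destruct x; unfold sd_mul, sd_one; simpl; rewrite act_one, !gmul1l; reflexivity. Qed.
Lemma sd_mul1r x : sd_mul x sd_one = x.
Proof. destruct x; unfold sd_mul, sd_one; simpl; rewrite act_e, !gmul1r; reflexivity. Qed.
Lemma sd_mulVl x : sd_mul (sd_inv x) x = sd_one.
Proof.
  destruct x as [h a]; unfold sd_mul, sd_inv, sd_one; simpl.
  rewrite <- act_mul, !gmulVl, act_e. reflexivity.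
Qed.
Lemma sd_mulVr x : sd_mul x (sd_inv x) = sd_one.
Proof.
  destruct x as [h a]; unfold sd_mul, sd_inv, sd_one; simpl.
  rewrite <- act_comp, !gmulVr, act_one, gmulVr. reflexivity.
Qed.

Definition semidirect : group :=
  Group (H * G)%type sd_mul sd_inv sd_one sd_mulA sd_mul1l sd_mul1r sd_mulVl sd_mulVr.
End Semidirect.

Definition relative_RB (G H : group) (P : action G H) (B : H -> G) : Prop :=
  forall h k : H, gmul (B h) (B k) = B (gmul h (P (B h) k)).

Definition RB_operator (K : group) (R : K -> K) : Prop :=
  forall u v : K,
    gmul (R u) (R v) = R (gmul (gmul (gmul u (R u)) v) (ginv (R u))).

(* The operator B' takes values in the subgroup {e} x G, so right multiplication by a
   value of B' only touches the G-coordinate; in particular u B'(u) = (h, B h) for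
   u = (h, a).  Hence u B'(u) v B'(u)^-1 has H-coordinate h Psi_{B h}(k) for v = (k, b),
   and the relative Rota--Baxter identity B(h) B(k) = B(h Psi_{B h}(k)) collapses the
   G-coordinate of its image under B' to a^-1 B(h) b^-1 B(k), which is B'(u) B'(v). *)

Section GroupFacts.
Variable K : group.

Lemma ginv_unique (x y : K) : gmul x y = gone -> ginv x = y.
Proof.
  intro E. transitivity (gmul (ginv x) (gmul x y)).
  - rewrite E, gmul1r. reflexivity.
  - rewrite gmulA, gmulVl, gmul1l. reflexivity.
Qed.

Lemma ginvM (x y : K) : ginv (gmul x y) = gmul (ginv y) (ginv x).
Proof.
  apply ginv_unique.
  rewrite gmulA, <- (gmulA _ x y), gmulVr, gmul1r, gmulVr. reflexivity.
Qed.

Lemma ginvK (x : K) : ginv (ginv x) = x.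
Proof. apply ginv_unique, gmulVl. Qed.

Lemma ginv1 : ginv (@gone K) = gone.
Proof. apply ginv_unique, gmul1l. Qed.

End GroupFacts.

Section SemidirectFacts.
Variables (G H : group) (Psi : action G H).

Lemma semidirect_mulE (h k : H) (a b : G) :
  @gmul (semidirect G H Psi) (h, a) (k, b) = (gmul h (Psi a k), gmul a b).
Proof. reflexivity. Qed.

Lemma semidirect_mul_vertical (u : semidirect G H Psi) (c : G) :
  gmul u (gone, c) = (fst u, gmul (snd u) c).
Proof. cbn; unfold sd_mul; cbn. rewrite act_e, gmul1r. reflexivity. Qed.

Lemma semidirect_inv_vertical (c : G) :
  @ginv (semidirect G H Psi) (gone, c) = (gone, ginv c).
Proof. cbn; unfold sd_inv; cbn. rewrite ginv1, act_e. reflexivity. Qed.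

End SemidirectFacts.

Theorem proposition3p1 (G H : group) (Psi : action G H) (B : H -> G) :
  relative_RB G H Psi B ->
  RB_operator (semidirect G H Psi)
    (fun p : H * G => ((gone : H), gmul (ginv (snd p)) (B (fst p)))).
Proof.
  intros HB [h a] [k b]. cbn beta iota delta [fst snd].
  rewrite semidirect_inv_vertical, !semidirect_mul_vertical.
  cbn [fst snd].
  rewrite (gmulA _ a (ginv a)), gmulVr, gmul1l, semidirect_mulE.
  cbn [fst snd].
  rewrite <- HB, !ginvM, !ginvK.
  f_equal.
  rewrite !gmulA, <- (gmulA _ _ (ginv (B h)) (B h)), gmulVl, gmul1r.
  reflexivity.
Qed.
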